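(* Let $F$ be the cdf of a continuous nonnegative random variable with unbounded support $[0,\infty)$, density $f$ and hazard rate $h=f/(1-F)$. Let $\sigma_1,\sigma_2\geq0$, $\lambda_1,\lambda_2>0$, $r_1,r_2\geq0$, and let $n_1,n_2,n_1^*,n_2^*$ be positive integers with $n_1r_1+n_2r_2=1$ and $n_1^*r_1+n_2^*r_2=1$; put $n=n_1+n_2$, $n^*=n_1^*+n_2^*$. Let $U_n$ and $U_{n^*}$ be random variables with cdfs $$F_{U_n}(x)=n_1r_1F\!\left(\tfrac{x-\sigma_1}{\lambda_1}\right)I(x>\sigma_1)+n_2r_2F\!\left(\tfrac{x-\sigma_2}{\lambda_2}\right)I(x>\sigma_2),$$ $$F_{U_{n^*}}(x)=n_1^*r_1F\!\left(\tfrac{x-\sigma_1}{\lambda_1}\right)I(x>\sigma_1)+n_2^*r_2F\!\left(\tfrac{x-\sigma_2}{\lambda_2}\right)I(x>\sigma_2).$$ Suppose either that $F$ is IFR and $(\lambda_1,\lambda_2),(\sigma_1,\sigma_2)\in\mathcal{D}_2^+$, or that $F$ is DPFR and $(\lambda_1,\lambda_2),(\sigma_1,\sigma_2)\in\mathcal{E}_2^+$. If $n_1n_2^*\geq n_1^*n_2$, then $U_n\geq_{hr}U_{n^*}$.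
   Context: $I(x>\sigma)$ is $1$ if $x>\sigma$ and $0$ otherwise. $\mathcal{D}_2^+=\{(u_1,u_2):u_1\geq u_2>0\}$, $\mathcal{E}_2^+=\{(u_1,u_2):0<u_1\leq u_2\}$. $F$ is IFR if $h(x)$ is increasing in $x>0$; $F$ is DPFR (decreasing proportional failure rate) if $xh(x)$ is decreasing in $x>0$. $X\geq_{hr}Y$ means the hazard rate of $X$ is at most the hazard rate of $Y$ at every $x\geq0$ (equivalently $\bar F_X(x)/\bar F_Y(x)$ is increasing). *)

From Stdlib Require Import Reals Lra.
Open Scope R_scope.

Definition ind_gt (s x : R) : R := if Rlt_dec s x then 1 else 0.

Definition lifetime_cdf (F f : R -> R) : Prop :=
  (forall x, continuity_pt F x) /\
  (forall x, x <= 0 -> F x = 0) /\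
  (forall x y, 0 <= x -> x < y -> F x < F y) /\   (* support is [0,oo) *)
  (forall x, F x < 1) /\                           (* unbounded support *)
  (forall eps, 0 < eps -> exists M, forall x, M < x -> 1 - F x < eps) /\
  (forall x, 0 < x -> 0 <= f x /\ derivable_pt_lim F x (f x)).

Definition hazard (F f : R -> R) (x : R) : R := f x / (1 - F x).

Definition IFR (F f : R -> R) : Prop :=
  forall x y, 0 < x -> x <= y -> hazard F f x <= hazard F f y.

Definition DPFR (F f : R -> R) : Prop :=
  forall x y, 0 < x -> x <= y -> y * hazard F f y <= x * hazard F f x.

Definition mix_cdf (F : R -> R) (a1 a2 s1 s2 l1 l2 : R) (x : R) : R :=
  a1 * F ((x - s1) / l1) * ind_gt s1 x + a2 * F ((x - s2) / l2) * ind_gt s2 x.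

Definition hr_ge (FX FY : R -> R) : Prop :=
  forall x y, x <= y -> (1 - FX x) / (1 - FY x) <= (1 - FX y) / (1 - FY y).

From Stdlib Require Import Reals Lra Psatz.
From Coquelicot Require Import Coquelicot.
Open Scope R_scope.

(* With weights satisfying [a2 b1 <= a1 b2], the ratio
   [(a1 u + a2 v) / (b1 u + b2 v)] of mixtures increases whenever [u / v] does,
   so it suffices that the survival ratio of the two location-scale components
   is nondecreasing.  Before [s1] the first component survives with probability
   one; after [s1], IFR together with [l2 <= l1] and [s2 <= s1] gives
   [h((x-s1)/l1)/l1 <= h((x-s2)/l2)/l2], i.e. the logarithmic derivative of the
   ratio is nonnegative.
   The DPFR alternative is empty: if [x h(x)] is nonincreasing then
   [h(x) >= K / x] near [0] for some [K > 0], so the cumulative hazard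
   [- ln (1 - F)] would diverge at [0], contradicting [F 0 = 0]. *)

(* Unlike [MVT_gen], the sign of the derivative is only required on the open
   interval, where the derivative exists. *)
Lemma le_of_is_derive_nonneg (g dg : R -> R) (a b : R) : a <= b ->
  (forall x, a < x < b -> is_derive g x (dg x)) ->
  (forall x, a <= x <= b -> continuity_pt g x) ->
  (forall x, a < x < b -> 0 <= dg x) -> g a <= g b.
Proof.
  intros hab hd hc hpos.
  destruct (Req_dec a b) as [<- | hne]; [lra |].
  assert (hd' : forall x (P : a < x < b), derivable_pt_lim g x (dg x))
    by (intros x P; apply is_derive_Reals, hd, P).
  pose (pr_g := fun x (P : a < x < b) => exist _ (dg x) (hd' x P) : derivable_pt g x).
  pose (pr_id := fun x (_ : a < x < b) => derivable_pt_id x).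
  destruct (MVT g id a b pr_g pr_id ltac:(lra) hc
              (fun x _ => derivable_continuous_pt _ _ (derivable_pt_id x)))
    as [c [P hmvt]].
  rewrite (derive_pt_eq_0 g c (dg c) (pr_g c P) (hd' c P)),
    (derive_pt_eq_0 id c 1 (pr_id c P) (derivable_pt_lim_id c)) in hmvt.
  unfold id in hmvt. specialize (hpos c P). nra.
Qed.

Lemma ratio_of_mixtures_le (a1 a2 b1 b2 u v u' v' : R) :
  a2 * b1 <= a1 * b2 -> u * v' <= u' * v ->
  0 < b1 * u + b2 * v -> 0 < b1 * u' + b2 * v' ->
  (a1 * u + a2 * v) / (b1 * u + b2 * v) <= (a1 * u' + a2 * v') / (b1 * u' + b2 * v').
Proof.
  intros hab huv hD hD'.
  assert (cross : (a1 * u' + a2 * v') * (b1 * u + b2 * v) - (a1 * u + a2 * v) * (b1 * u' + b2 * v')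
                  = (a1 * b2 - a2 * b1) * (u' * v - u * v')) by ring.
  apply (Rmult_le_reg_r ((b1 * u + b2 * v) * (b1 * u' + b2 * v'))); [nra |].
  field_simplify; try lra. nra.
Qed.

Lemma shifted_scaled_le (s1 s2 l1 l2 x : R) :
  0 < l2 <= l1 -> s2 <= s1 -> s1 <= x -> (x - s1) / l1 <= (x - s2) / l2.
Proof.
  intros hl hs hx.
  assert (hu : (x - s1) / l1 * l1 = x - s1) by (field; lra).
  assert (0 <= (x - s1) / l1) by (apply Rdiv_le_0_compat; lra).
  apply (Rle_div_r _ _ l2); [lra | nra].
Qed.

Definition scaled_survival (F : R -> R) (s l x : R) : R := 1 - F ((x - s) / l).

Definition log_survival_ratio (F : R -> R) (s1 l1 s2 l2 x : R) : R :=
  ln (scaled_survival F s1 l1 x) - ln (scaled_survival F s2 l2 x).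

Section Lifetime.
Variables F f : R -> R.
Hypothesis HF : lifetime_cdf F f.

Lemma survival_pos x : 0 < 1 - F x.
Proof. destruct HF as (_ & _ & _ & hlt1 & _). specialize (hlt1 x). lra. Qed.

Lemma cdf_nonpos x : x <= 0 -> F x = 0.
Proof. destruct HF as (_ & h0 & _). apply h0. Qed.

Lemma cdf_le x y : x <= y -> F x <= F y.
Proof.
  destruct HF as (_ & h0 & hlt & _). intros hxy.
  destruct (Rle_lt_dec y 0); [rewrite !h0; lra |].
  destruct (Rle_lt_dec x 0).
  - rewrite (h0 x), <- (h0 0) by lra. left; apply hlt; lra.
  - destruct (Req_dec x y) as [-> | ]; [lra |]. left; apply hlt; lra.
Qed.

Lemma cdf_ge0 x : 0 <= F x.
Proof.
  rewrite <- (cdf_nonpos (Rmin x 0)) by apply Rmin_r.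
  apply cdf_le, Rmin_l.
Qed.

Lemma is_derive_cdf x : 0 < x -> is_derive F x (f x).
Proof. destruct HF as (_ & _ & _ & _ & _ & hd). intros hx. apply is_derive_Reals, hd, hx. Qed.

Lemma hazard_ge0 x : 0 < x -> 0 <= hazard F f x.
Proof.
  destruct HF as (_ & _ & _ & _ & _ & hd). intros hx.
  apply Rdiv_le_0_compat; [apply hd, hx | apply survival_pos].
Qed.

Lemma density_pos_somewhere : exists c, 0 < c /\ 0 < f c.
Proof.
  destruct HF as (_ & _ & hlt & _ & _ & hd).
  destruct (MVT_cor2 F f (/ 2) 1 ltac:(lra)) as [c [hmvt hc]].
  { intros c hc. apply hd. lra. }
  exists c. split; [lra |].
  specialize (hlt (/ 2) 1 ltac:(lra) ltac:(lra)). nra.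
Qed.

Lemma is_derive_log_survival x : 0 < x ->
  is_derive (fun z => ln (1 - F z)) x (- hazard F f x).
Proof.
  intros hx. pose proof (is_derive_cdf x hx) as hF. pose proof (survival_pos x).
  auto_derive.
  - repeat split; [exists (f x); exact hF | lra].
  - replace (Derive (fun z : R => F z) x) with (f x)
      by (symmetry; apply is_derive_unique, hF).
    unfold hazard. field. lra.
Qed.

Lemma not_DPFR : ~ DPFR F f.
Proof.
  intros hD.
  destruct density_pos_somewhere as [c [hc hfc]].
  set (K := c * hazard F f c).
  assert (hK : 0 < K).
  { apply Rmult_lt_0_compat; [lra |]. apply Rdiv_lt_0_compat; [lra | apply survival_pos]. }
  set (phi := fun z => - ln (1 - F z) - K * ln z).
  assert (dphi : forall z, 0 < z -> is_derive phi z (hazard F f z - K / z)).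
  { intros z hz.
    replace (hazard F f z - K / z) with (minus (opp (- hazard F f z)) (scal K (/ z)))
      by (unfold minus, plus, opp, scal; simpl; unfold mult; simpl; field; lra).
    apply (is_derive_minus (fun z => - ln (1 - F z)) (fun z => K * ln z)).
    - apply (is_derive_opp (fun z => ln (1 - F z))), is_derive_log_survival, hz.
    - apply (is_derive_scal ln), is_derive_ln, hz. }
  assert (phi_le : forall e, 0 < e <= c -> phi e <= phi c).
  { intros e he.
    apply (le_of_is_derive_nonneg phi (fun z => hazard F f z - K / z)); [lra | | |].
    - intros z hz. apply dphi. lra.
    - intros z hz. apply derivable_continuous_pt.
      eexists. apply is_derive_Reals, dphi. lra.
    - intros z hz. specialize (hD z c ltac:(lra) ltac:(lra)).
      apply (Rmult_le_reg_l z); [lra |].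
      replace (z * (hazard F f z - K / z)) with (z * hazard F f z - K) by (field; lra).
      fold K in hD. lra. }
  set (e := exp (- (phi c + 1) / K)).
  assert (he : 0 < e) by apply exp_pos.
  assert (hlne : K * ln e = - (phi c + 1)) by (unfold e; rewrite ln_exp; field; lra).
  assert (ln (1 - F e) <= 0).
  { rewrite <- ln_1. apply ln_le; [apply survival_pos | pose proof (cdf_ge0 e); lra]. }
  assert (hec : e <= c).
  { destruct (Rle_lt_dec e c) as [| hce]; [assumption | exfalso].
    assert (ln c < ln e) by (apply ln_increasing; lra).
    assert (ln (1 - F c) <= 0).
    { rewrite <- ln_1. apply ln_le; [apply survival_pos | pose proof (cdf_ge0 c); lra]. }
    unfold phi in hlne. nra. }
  specialize (phi_le e (conj he hec)). unfold phi in phi_le at 1. lra.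
Qed.

Lemma scaled_survival_before s l x : 0 < l -> x <= s -> scaled_survival F s l x = 1.
Proof.
  intros hl hx. unfold scaled_survival. rewrite cdf_nonpos; [ring |].
  apply Rle_div_l; lra.
Qed.

Lemma scaled_survival_pos s l x : 0 < scaled_survival F s l x.
Proof. apply survival_pos. Qed.

Lemma scaled_survival_le s l x y : 0 < l -> x <= y ->
  scaled_survival F s l y <= scaled_survival F s l x.
Proof.
  intros hl hxy. unfold scaled_survival.
  assert (F ((x - s) / l) <= F ((y - s) / l)); [| lra].
  apply cdf_le. unfold Rdiv. apply Rmult_le_compat_r; [left; apply Rinv_0_lt_compat |]; lra.
Qed.

Lemma is_derive_log_scaled_survival s l x : 0 < l -> s < x ->
  is_derive (fun z => ln (scaled_survival F s l z)) x (- hazard F f ((x - s) / l) / l).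
Proof.
  intros hl hx. unfold scaled_survival.
  replace (- hazard F f ((x - s) / l) / l) with (scal (/ l) (- hazard F f ((x - s) / l)))
    by (unfold scal; simpl; unfold mult; simpl; field; lra).
  apply (is_derive_comp (fun u => ln (1 - F u)) (fun z => (z - s) / l)).
  - apply is_derive_log_survival. apply Rdiv_lt_0_compat; lra.
  - auto_derive; [exact I | field; lra].
Qed.

Lemma continuous_log_scaled_survival s l x : 0 < l ->
  continuity_pt (fun z => ln (scaled_survival F s l z)) x.
Proof.
  intros hl. destruct HF as (hc & _).
  apply (continuity_pt_comp (fun z => scaled_survival F s l z) ln).
  - apply continuity_pt_minus; [apply continuity_pt_const; intros ? ?; reflexivity |].
    apply (continuity_pt_comp (fun z => (z - s) / l) F); [| apply hc].
    apply derivable_continuous_pt. reg.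
  - apply derivable_continuous_pt. exists (/ scaled_survival F s l x).
    apply derivable_pt_lim_ln, scaled_survival_pos.
Qed.

Lemma scaled_cdf_indicator s l x : 0 < l -> F ((x - s) / l) * ind_gt s x = F ((x - s) / l).
Proof.
  intros hl. unfold ind_gt. destruct (Rlt_dec s x); [ring |].
  rewrite cdf_nonpos; [ring | apply Rle_div_l; lra].
Qed.

Lemma mix_cdf_survival a1 a2 s1 s2 l1 l2 x : 0 < l1 -> 0 < l2 -> a1 + a2 = 1 ->
  1 - mix_cdf F a1 a2 s1 s2 l1 l2 x =
  a1 * scaled_survival F s1 l1 x + a2 * scaled_survival F s2 l2 x.
Proof.
  intros hl1 hl2 ha. unfold mix_cdf, scaled_survival.
  rewrite !Rmult_assoc, !scaled_cdf_indicator by assumption. lra.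
Qed.

Section IFR.
Hypothesis hI : IFR F f.
Variables s1 s2 l1 l2 : R.
Hypotheses (hl : 0 < l2 <= l1) (hs : s2 <= s1).

Lemma log_survival_ratio_le_before a b : a <= b <= s1 ->
  log_survival_ratio F s1 l1 s2 l2 a <= log_survival_ratio F s1 l1 s2 l2 b.
Proof.
  intros hab. unfold log_survival_ratio.
  rewrite (scaled_survival_before s1 l1 a), (scaled_survival_before s1 l1 b) by lra.
  assert (ln (scaled_survival F s2 l2 b) <= ln (scaled_survival F s2 l2 a)); [| lra].
  apply ln_le; [apply scaled_survival_pos | apply scaled_survival_le; lra].
Qed.

Lemma log_survival_ratio_le_after a b : s1 <= a <= b ->
  log_survival_ratio F s1 l1 s2 l2 a <= log_survival_ratio F s1 l1 s2 l2 b.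
Proof.
  intros hab.
  apply (le_of_is_derive_nonneg _
    (fun z => hazard F f ((z - s2) / l2) / l2 - hazard F f ((z - s1) / l1) / l1)); [lra | | |].
  - intros z hz. unfold log_survival_ratio.
    replace (hazard F f ((z - s2) / l2) / l2 - hazard F f ((z - s1) / l1) / l1)
      with (minus (- hazard F f ((z - s1) / l1) / l1) (- hazard F f ((z - s2) / l2) / l2))
      by (unfold minus, plus, opp; simpl; field; lra).
    apply (is_derive_minus (fun z => ln (scaled_survival F s1 l1 z))
                           (fun z => ln (scaled_survival F s2 l2 z)));
      apply is_derive_log_scaled_survival; lra.
  - intros z _. unfold log_survival_ratio.
    apply continuity_pt_minus; apply continuous_log_scaled_survival; lra.
  - intros z hz.
    assert (hu1 : 0 < (z - s1) / l1) by (apply Rdiv_lt_0_compat; lra).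
    pose proof (shifted_scaled_le s1 s2 l1 l2 z hl hs ltac:(lra)) as hu12.
    pose proof (hI _ _ hu1 hu12) as hh.
    pose proof (hazard_ge0 _ hu1) as hh1.
    set (h1 := hazard F f ((z - s1) / l1)) in *.
    set (h2 := hazard F f ((z - s2) / l2)) in *.
    assert (h1 / l1 <= h1 / l2).
    { unfold Rdiv. apply Rmult_le_compat_l; [lra |]. apply Rinv_le_contravar; lra. }
    assert (h1 / l2 <= h2 / l2).
    { unfold Rdiv. apply Rmult_le_compat_r; [left; apply Rinv_0_lt_compat |]; lra. }
    lra.
Qed.

Lemma log_survival_ratio_le x y : x <= y ->
  log_survival_ratio F s1 l1 s2 l2 x <= log_survival_ratio F s1 l1 s2 l2 y.
Proof.
  intros hxy. destruct (Rle_lt_dec y s1) as [hy | hy].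
  - apply log_survival_ratio_le_before. lra.
  - apply Rle_trans with (log_survival_ratio F s1 l1 s2 l2 (Rmax x s1)).
    + destruct (Rle_dec x s1).
      * rewrite Rmax_right by lra. apply log_survival_ratio_le_before. lra.
      * rewrite Rmax_left by lra. lra.
    + apply log_survival_ratio_le_after. split; [apply Rmax_r | apply Rmax_lub; lra].
Qed.

Lemma scaled_survival_cross_le x y : x <= y ->
  scaled_survival F s1 l1 x * scaled_survival F s2 l2 y <=
  scaled_survival F s1 l1 y * scaled_survival F s2 l2 x.
Proof.
  intros hxy. pose proof (log_survival_ratio_le x y hxy) as hlog.
  unfold log_survival_ratio in hlog.
  pose proof (scaled_survival_pos s1 l1 x). pose proof (scaled_survival_pos s2 l2 x).
  pose proof (scaled_survival_pos s1 l1 y). pose proof (scaled_survival_pos s2 l2 y).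
  apply Rnot_lt_le. intros hlt. apply ln_increasing in hlt; [| nra].
  rewrite !ln_mult in hlt by assumption. lra.
Qed.

End IFR.
End Lifetime.

Theorem theorem4p3 (F f : R -> R) (s1 s2 l1 l2 r1 r2 : R)
  (n1 n2 m1 m2 : nat) :
  lifetime_cdf F f ->
  0 <= s1 -> 0 <= s2 -> 0 < l1 -> 0 < l2 -> 0 <= r1 -> 0 <= r2 ->
  (0 < n1)%nat -> (0 < n2)%nat -> (0 < m1)%nat -> (0 < m2)%nat ->
  INR n1 * r1 + INR n2 * r2 = 1 ->
  INR m1 * r1 + INR m2 * r2 = 1 ->
  ((IFR F f /\ 0 < l2 <= l1 /\ 0 < s2 <= s1) \/
   (DPFR F f /\ 0 < l1 <= l2 /\ 0 < s1 <= s2)) ->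
  (n1 * m2 >= m1 * n2)%nat ->
  hr_ge (mix_cdf F (INR n1 * r1) (INR n2 * r2) s1 s2 l1 l2)
        (mix_cdf F (INR m1 * r1) (INR m2 * r2) s1 s2 l1 l2).
Proof.
  intros HF _ _ hl1 hl2 hr1 hr2 _ _ _ _ hn hm hcase hnm.
  destruct hcase as [[hI [hl hs]] | [hD _]]; [| exfalso; exact (not_DPFR F f HF hD)].
  assert (weights : INR n2 * r2 * (INR m1 * r1) <= INR n1 * r1 * (INR m2 * r2)).
  { replace (INR n2 * r2 * (INR m1 * r1)) with (r1 * r2 * INR (m1 * n2)) by (rewrite mult_INR; ring).
    replace (INR n1 * r1 * (INR m2 * r2)) with (r1 * r2 * INR (n1 * m2)) by (rewrite mult_INR; ring).
    apply Rmult_le_compat_l; [nra | apply le_INR; lia]. }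
  assert (mix_pos : forall z, 0 < INR m1 * r1 * scaled_survival F s1 l1 z +
                                  INR m2 * r2 * scaled_survival F s2 l2 z).
  { intros z. pose proof (scaled_survival_pos F f HF s1 l1 z).
    pose proof (scaled_survival_pos F f HF s2 l2 z).
    assert (0 <= INR m1 * r1) by (apply Rmult_le_pos; [apply pos_INR | lra]).
    assert (0 <= INR m2 * r2) by (apply Rmult_le_pos; [apply pos_INR | lra]).
    destruct (Rle_lt_dec (scaled_survival F s1 l1 z) (scaled_survival F s2 l2 z)); nra. }
  intros x y hxy.
  rewrite !(mix_cdf_survival F f HF) by assumption.
  apply ratio_of_mixtures_le; [exact weights | | apply mix_pos | apply mix_pos].
  apply (scaled_survival_cross_le F f HF hI); lra.
Qed.
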